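(* Let $U$ be a finite set and let $d$ be an $\alpha$-relaxed semi-metric distance on $U$ for some $\alpha \ge 1$. Then for any two disjoint subsets $X, Y \subseteq U$, $$\alpha\,(|X|-1)\,d(X,Y) \;\ge\; |Y|\, d(X).$$
   Context: An $\alpha$-relaxed semi-metric distance on $U$ (with $\alpha\ge 1$) is a function $d:U\times U\to\mathbb{R}_{\ge 0}$ with $d(u,v)=d(v,u)$, $d(u,u)=0$, satisfying the relaxed triangle inequality $d(u,v)\le \alpha\,(d(v,w)+d(w,u))$ for all $u,v,w\in U$. For $S\subseteq U$, $d(S)=\sum_{\{u,v\}\subseteq S,\,u\neq v} d(u,v)$ (sum over unordered pairs). For disjoint $S,T\subseteq U$, $d(S,T)=d(S\cup T)-d(S)-d(T)=\sum_{s\in S,\,t\in T} d(s,t)$. *)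

From mathcomp Require Import all_boot all_order all_algebra.
Set Implicit Arguments. Unset Strict Implicit. Unset Printing Implicit Defensive.
Import Order.TTheory GRing.Theory Num.Theory.
Local Open Scope ring_scope.

Definition relaxed_semimetric (R : realFieldType) (U : finType)
  (alpha : R) (d : U -> U -> R) : Prop :=
  [/\ forall u v, 0 <= d u v,
      forall u v, d u v = d v u,
      forall u, d u u = 0 &
      forall u v w, d u v <= alpha * (d v w + d w u)].

(* d(S): sum over unordered pairs {u,v} of distinct elements of S; each
   unordered pair is counted once via the canonical enumeration order. *)
Definition dset (R : realFieldType) (U : finType) (d : U -> U -> R)
  (S : {set U}) : R :=
  \sum_(p in setX S S | (enum_rank p.1 < enum_rank p.2)%N) d p.1 p.2.

Definition dset2 (R : realFieldType) (U : finType) (d : U -> U -> R)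
  (S T : {set U}) : R :=
  dset d (S :|: T) - dset d S - dset d T.

(** For distinct x, x' in X and any y in Y the relaxed triangle inequality gives
    d(x,x') <= alpha (d(x,y) + d(y,x')).  Summing over y in Y bounds |Y| d(x,x')
    by alpha (c x + c x'), where c x is the total distance from x to Y; summing
    further over the ordered pairs of distinct points of X, every c x occurs
    2 (|X| - 1) times, so 2 |Y| d(X) <= 2 alpha (|X| - 1) d(X,Y). *)

From mathcomp Require Import all_boot all_order all_algebra.
From mathcomp Require Import ring lra.
Import Order.TTheory GRing.Theory Num.Theory.
Local Open Scope ring_scope.

Lemma sum_offdiag_addE (R : comPzRingType) (U : finType) (f : U -> R)
    (X : {set U}) :
  \sum_(x in X) \sum_(x' in X :\ x) (f x + f x') =
  (#|X|%:R - 1) * (\sum_(x in X) f x) *+ 2.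
Proof.
have sum_rem x : x \in X -> \sum_(x' in X :\ x) f x' = \sum_(x' in X) f x' - f x.
  by move=> xX; rewrite [X in _ = X - _](big_setD1 x xX) /= [f x + _]addrC addrK.
have card_rem x : x \in X -> #|X :\ x|%:R = #|X|%:R - 1 :> R.
  by move=> xX; rewrite [#|X|](cardsD1 x) xX add1n mulrSr addrK.
transitivity (\sum_(x in X) (f x * (#|X|%:R - 1) + (\sum_(x' in X) f x' - f x))).
  apply: eq_bigr => x xX.
  by rewrite big_split /= sumr_const -[f x *+ _]mulr_natr card_rem // sum_rem.
by rewrite big_split /= -mulr_suml sumrB sumr_const -mulr_natr mulr2n; ring.
Qed.

Section SymmetricDistance.

Variables (R : realFieldType) (U : finType) (d : U -> U -> R).
Hypothesis d_sym : forall u v, d u v = d v u.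
Hypothesis d_refl : forall u, d u u = 0.

Lemma dset_pairsE (S : {set U}) :
  \sum_(x in S) \sum_(y in S) d x y = dset d S *+ 2.
Proof.
have dsetE : dset d S =
    \sum_(x in S) \sum_(y in S | (enum_rank x < enum_rank y)%N) d x y.
  rewrite /dset pair_big_dep; apply: eq_bigl => -[a b].
  by rewrite /= in_setX andbA.
transitivity (\sum_(x in S) \sum_(y in S)
    ((if (enum_rank x < enum_rank y)%N then d x y else 0) +
     (if (enum_rank y < enum_rank x)%N then d x y else 0))).
  apply: eq_bigr => x _; apply: eq_bigr => y _.
  case: ltngtP => h; rewrite ?addr0 ?add0r //.
  by move/val_inj/enum_rank_inj: h => ->; rewrite d_refl.
under eq_bigr do rewrite big_split /=.
rewrite big_split /= mulr2n dsetE; congr (_ + _).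
  by apply: eq_bigr => x _; rewrite big_mkcondr.
rewrite exchange_big; apply: eq_bigr => x _; rewrite big_mkcondr.
by apply: eq_bigr => y _; rewrite d_sym.
Qed.

Lemma dset_offdiagE (S : {set U}) :
  \sum_(x in S) \sum_(x' in S :\ x) d x x' = dset d S *+ 2.
Proof.
rewrite -dset_pairsE; apply: eq_bigr => x xS.
by rewrite [RHS](big_setD1 x xS) /= d_refl add0r.
Qed.

Lemma dset2_cross (X Y : {set U}) : [disjoint X & Y] ->
  dset2 d X Y = \sum_(x in X) \sum_(y in Y) d x y.
Proof.
move=> XY.
have sumU (F : U -> R) : \sum_(i in X :|: Y) F i = \sum_(i in X) F i + \sum_(i in Y) F i.
  by rewrite -bigU //; apply: eq_bigl => i; rewrite !inE.
have := dset_pairsE (X :|: Y).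
rewrite sumU; under eq_bigr do rewrite sumU; rewrite big_split /=.
under [\sum_(i in Y) _]eq_bigr do rewrite sumU; rewrite [\sum_(i in Y) (_ + _)]big_split /=.
rewrite !dset_pairsE [\sum_(i in Y) \sum_(j in X) _]exchange_big /=.
under [\sum_(j in X) \sum_(i in Y) d i j]eq_bigr do under eq_bigr do rewrite d_sym.
by rewrite /dset2 !mulr2n; lra.
Qed.

Variable alpha : R.
Hypothesis d_tri : forall u v w, d u v <= alpha * (d v w + d w u).

Lemma card_mul_le_relaxed (Y : {set U}) (x x' : U) :
  #|Y|%:R * d x x' <= alpha * (\sum_(y in Y) d x y + \sum_(y in Y) d x' y).
Proof.
rewrite -big_split /= mulr_sumr mulr_natl -sumr_const.
by apply: ler_sum => y _; rewrite addrC (d_sym x y); apply: d_tri.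
Qed.

End SymmetricDistance.

Theorem lemma1 (R : realFieldType) (U : finType) (alpha : R)
  (d : U -> U -> R) (X Y : {set U}) :
  1 <= alpha ->
  relaxed_semimetric alpha d ->
  [disjoint X & Y] ->
  alpha * ((#|X|%:R - 1) * dset2 d X Y) >= #|Y|%:R * dset d X.
Proof.
move=> _ [_ d_sym d_refl d_tri] XY.
rewrite dset2_cross //.
have : #|Y|%:R * (dset d X *+ 2) <=
    alpha * ((#|X|%:R - 1) * \sum_(x in X) \sum_(y in Y) d x y) *+ 2.
  rewrite -(@dset_offdiagE _ _ d d_sym d_refl) mulr_sumr.
  apply: le_trans (_ : _ <= \sum_(x in X) \sum_(x' in X :\ x)
      alpha * (\sum_(y in Y) d x y + \sum_(y in Y) d x' y)) _.
    apply: ler_sum => x _; rewrite mulr_sumr; apply: ler_sum => x' _.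
    exact: card_mul_le_relaxed.
  under eq_bigr do rewrite -mulr_sumr.
  by rewrite -mulr_sumr (@sum_offdiag_addE _ _ (fun x => \sum_(y in Y) d x y)) mulrnAr.
by rewrite !mulr2n; lra.
Qed.
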